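(* Suppose $M\in\mathbb{R}_+^{p\times q}$ is such that both $M$ and $M^T$ are slack matrices of polytopes. Then there exists a polytope $P$ with $0$ in the interior of $P$ such that $M$ is a slack matrix of $P$ and $M^T$ is a slack matrix of the polar $P^\circ=\{y: x^Ty\le 1 \text{ for all } x\in P\}$.
   Context: For a polytope $P\subseteq\mathbb{R}^n$ with $\dim(P)\ge 1$, a slack matrix of $P$ is any matrix $S=[\mathbb{1},V]\cdot[w,-W]^T\in\mathbb{R}^{p\times q}$ (so $S_{ij}=w_j-W_jv_i$, with $v_i$ the $i$th row of $V$ and $W_j$ the $j$th row of $W$), where $V\in\mathbb{R}^{p\times n}$ satisfies $P=\operatorname{conv}(\text{rows of }V)$ and $W\in\mathbb{R}^{q\times n}$, $w\in\mathbb{R}^q$ satisfy $P=\{x\in\mathbb{R}^n: Wx\le w\}$. A matrix is a slack matrix of a polytope if it is a slack matrix of some polytope of dimension at least one. *)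

From HB Require Import structures.
From mathcomp Require Import all_boot all_order all_algebra.
From mathcomp Require Import reals.
Set Implicit Arguments. Unset Strict Implicit. Unset Printing Implicit Defensive.
Import Order.TTheory GRing.Theory Num.Theory.
Local Open Scope ring_scope.

Definition dotv (R : realType) (n : nat) (x y : 'rV[R]_n) : R :=
  \sum_(k < n) x 0 k * y 0 k.

Definition in_conv_rows (R : realType) (p n : nat) (V : 'M[R]_(p, n))
    (x : 'rV[R]_n) : Prop :=
  exists lam : 'I_p -> R,
    (forall i, 0 <= lam i) /\ \sum_(i < p) lam i = 1 /\
    x = \sum_(i < p) lam i *: row i V.

Definition is_conv_rows (R : realType) (p n : nat) (P : 'rV[R]_n -> Prop)
    (V : 'M[R]_(p, n)) : Prop :=
  forall x, P x <-> in_conv_rows V x.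

Definition is_ineq_desc (R : realType) (q n : nat) (P : 'rV[R]_n -> Prop)
    (W : 'M[R]_(q, n)) (w : 'I_q -> R) : Prop :=
  forall x, P x <-> (forall j : 'I_q, dotv (row j W) x <= w j).

Definition is_polytope (R : realType) (n : nat) (P : 'rV[R]_n -> Prop) : Prop :=
  exists (p : nat) (V : 'M[R]_(p, n)), is_conv_rows P V.

(* dim(P) >= 1, i.e. the affine hull of P is not a single point (nor empty):
   P contains two distinct points. *)
Definition dim_ge1 (R : realType) (n : nat) (P : 'rV[R]_n -> Prop) : Prop :=
  exists x y, P x /\ P y /\ x <> y.

(* S is a slack matrix of the polytope P (of dimension >= 1):
   S = [1, V] [w, -W]^T, i.e. S_ij = w_j - W_j v_i, with
   P = conv(rows of V) and P = { x : W x <= w }. *)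
Definition is_slack_matrix_of (R : realType) (n p q : nat)
    (P : 'rV[R]_n -> Prop) (S : 'M[R]_(p, q)) : Prop :=
  is_polytope P /\ dim_ge1 P /\
  exists (V : 'M[R]_(p, n)) (W : 'M[R]_(q, n)) (w : 'I_q -> R),
    is_conv_rows P V /\ is_ineq_desc P W w /\
    forall i j, S i j = w j - dotv (row j W) (row i V).

Definition is_slack_matrix (R : realType) (p q : nat) (S : 'M[R]_(p, q)) : Prop :=
  exists (n : nat) (P : 'rV[R]_n -> Prop), is_slack_matrix_of P S.

Definition polar (R : realType) (n : nat) (P : 'rV[R]_n -> Prop) : 'rV[R]_n -> Prop :=
  fun y => forall x, P x -> dotv x y <= 1.

Definition zero_in_interior (R : realType) (n : nat) (P : 'rV[R]_n -> Prop) : Prop :=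
  exists eps : R, 0 < eps /\
    forall x : 'rV[R]_n, (forall k, `|x 0 k| < eps) -> P x.

(* Let M be a slack matrix of P1 and M^T one of P2.  The constant function 1 on
   the vertices of P2 lies in the column space of M^T, i.e. some combination of
   the rows of M is the all-ones row.  Pushed through the factorisation
   M = [1, V] [w, -W]^T, this produces a point x0 of P1 whose slack to every
   facet is the same s > 0.  Translating x0 to the origin and taking coordinates
   in the affine hull gives a full-dimensional polytope P = conv C =
   {x : Wm x <= s}, with slack matrix M and 0 in its interior; its polar is
   {y : C y <= 1}.  For such y, the nonnegative vector s - s C y is an affine
   function of the vertices, hence lies in the column space of M, and because
   M^T is a slack matrix it is t times a convex combination nu of the columns of
   M.  The columns of M are the slacks of the rows of Wm, so C (s y - t Y) is
   constant for Y = sum nu_j Wm_j; as 0 is interior this forces t = 1 and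
   y = Y / s.  Hence the polar is conv (Wm / s) = {y : (s C) y <= s}, whose
   slack matrix is M^T. *)

From HB Require Import structures.
From mathcomp Require Import all_boot all_order all_algebra.
From mathcomp Require Import reals.
From mathcomp Require Import ring lra.
Import Order.TTheory GRing.Theory Num.Theory.
Local Open Scope ring_scope.

Section DotProduct.
Context {R : realType} {n : nat}.
Implicit Types x y z : 'rV[R]_n.

Lemma dotvE x y : dotv x y = (x *m y^T) 0 0.
Proof. by rewrite mxE; apply: eq_bigr => k _; rewrite mxE. Qed.

Lemma dotvC x y : dotv x y = dotv y x.
Proof. by rewrite /dotv; apply: eq_bigr => k _; rewrite mulrC. Qed.

Lemma dotvDl x y z : dotv (x + y) z = dotv x z + dotv y z.
Proof. by rewrite !dotvE mulmxDl mxE. Qed.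

Lemma dotvBl x y z : dotv (x - y) z = dotv x z - dotv y z.
Proof. by rewrite !dotvE mulmxBl !mxE. Qed.

Lemma dotvZl a x z : dotv (a *: x) z = a * dotv x z.
Proof. by rewrite !dotvE -scalemxAl mxE. Qed.

Lemma dotv0l z : dotv 0 z = 0.
Proof. by rewrite dotvE mul0mx mxE. Qed.

Lemma dotv_suml (I : finType) (F : I -> 'rV[R]_n) z :
  dotv (\sum_i F i) z = \sum_i dotv (F i) z.
Proof.
by rewrite dotvE mulmx_suml summxE; apply: eq_bigr => i _; rewrite dotvE.
Qed.

Lemma dotvDr x y z : dotv z (x + y) = dotv z x + dotv z y.
Proof. by rewrite dotvC dotvDl !(dotvC z). Qed.

Lemma dotvBr x y z : dotv z (x - y) = dotv z x - dotv z y.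
Proof. by rewrite dotvC dotvBl !(dotvC z). Qed.

Lemma dotvZr a x z : dotv z (a *: x) = a * dotv z x.
Proof. by rewrite dotvC dotvZl dotvC. Qed.

Lemma dotv_sumr (I : finType) (F : I -> 'rV[R]_n) z :
  dotv z (\sum_i F i) = \sum_i dotv z (F i).
Proof. by rewrite dotvC dotv_suml; apply: eq_bigr => i _; rewrite dotvC. Qed.

Lemma dotv_delta k z : dotv (delta_mx 0 k) z = z 0 k.
Proof. by rewrite dotvE -rowE !mxE. Qed.

End DotProduct.

Lemma dotv_mulmx (R : realType) n m (x : 'rV[R]_n) (A : 'M[R]_(n, m)) y :
  dotv (x *m A) y = dotv x (y *m A^T).
Proof. by rewrite !dotvE trmx_mul trmxK mulmxA. Qed.

Section ConvexHull.
Context {R : realType} {p n : nat} (V : 'M[R]_(p, n)).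

Lemma row_in_conv i : in_conv_rows V (row i V).
Proof.
exists (fun l => (l == i)%:R); split; first by move=> l; rewrite ler0n.
split; first by rewrite (bigD1 i) //= eqxx big1 ?addr0 // => l /negPf ->.
rewrite (bigD1 i) //= eqxx scale1r big1 ?addr0 // => l /negPf ->.
by rewrite scale0r.
Qed.

Lemma dotv_conv (lam : 'I_p -> R) y :
  dotv (\sum_i lam i *: row i V) y = \sum_i lam i * dotv (row i V) y.
Proof. by rewrite dotv_suml; apply: eq_bigr => i _; rewrite dotvZl. Qed.

Lemma conv_dotv_le {x y b} :
  in_conv_rows V x -> (forall i, dotv (row i V) y <= b) -> dotv x y <= b.
Proof.
move=> [lam [lam0 [lam1 ->]]] hb; rewrite dotv_conv.
rewrite -[b]mul1r -lam1 big_distrl /=.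
by apply: ler_sum => i _; apply: ler_wpM2l.
Qed.

Lemma conv_dotv_eq {x y b} :
  in_conv_rows V x -> (forall i, dotv (row i V) y = b) -> dotv x y = b.
Proof.
move=> [lam [lam0 [lam1 ->]]] hb; rewrite dotv_conv.
by rewrite -[b]mul1r -lam1 big_distrl /=; apply: eq_bigr => i _; rewrite hb.
Qed.

Lemma conv_coord_bound x k : in_conv_rows V x -> `|x 0 k| <= \sum_i `|V i k|.
Proof.
move=> [lam [lam0 [lam1 ->]]]; rewrite summxE.
apply: le_trans (ler_norm_sum _ _ _) _; apply: ler_sum => i _.
rewrite !mxE normrM ger0_norm //; apply: ler_piMl => //.
by rewrite -lam1 (bigD1 i) //= lerDl sumr_ge0.
Qed.

Lemma in_conv_rows_affine {m} {C : 'M[R]_(p, m)} {B : 'M[R]_(m, n)} {x0} :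
  row_free B -> (forall i, row i C *m B = row i V - x0) ->
  forall c, in_conv_rows C c <-> in_conv_rows V (x0 + c *m B).
Proof.
move=> freeB rowC c.
have image (lam : 'I_p -> R) : \sum_i lam i = 1 ->
    (\sum_i lam i *: row i C) *m B = \sum_i lam i *: row i V - x0.
  move=> lam1; rewrite mulmx_suml.
  under eq_bigr do rewrite -scalemxAl rowC scalerBr.
  by rewrite sumrB -scaler_suml lam1 scale1r.
split=> [[lam [lam0 [lam1 ->]]]|[lam [lam0 [lam1 hc]]]].
  by exists lam; do 2!split=> //; rewrite image // addrC subrK.
exists lam; do 2!split=> //; apply: (row_free_inj freeB).
by rewrite /= image // -hc addrC addKr.
Qed.

End ConvexHull.

Section Interior.
Context {R : realType} {n : nat}.
Implicit Types P : 'rV[R]_n -> Prop.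

Lemma ineq_desc_zero_in_interior {P m} {A : 'M[R]_(m, n)} {s} :
  0 < s -> is_ineq_desc P A (fun=> s) -> zero_in_interior P.
Proof.
move=> s0 hP; pose T := \sum_i \sum_k `|A i k|.
have T0 : 0 <= T by apply: sumr_ge0 => i _; apply: sumr_ge0.
exists (s / (1 + T)); split; first by rewrite divr_gt0 // ltr_wpDr.
move=> x hx; apply/hP => i; rewrite /dotv.
apply: le_trans (ler_norm _) _; apply: le_trans (ler_norm_sum _ _ _) _.
apply: (@le_trans _ _ (\sum_k `|A i k| * (s / (1 + T)))).
  by apply: ler_sum => k _; rewrite !mxE normrM ler_wpM2l // ltW.
have rowT : \sum_k `|A i k| <= 1 + T.
  suff : \sum_k `|A i k| <= T by lra.
  rewrite /T (bigD1 i) //= lerDl.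
  by apply: sumr_ge0 => l _; apply: sumr_ge0.
rewrite -big_distrl /= mulrA ler_pdivrMr ?ltr_wpDr // mulrC.
by rewrite ler_wpM2l // ltW.
Qed.

Lemma interior_dim_ge1 {P} : (0 < n)%N -> zero_in_interior P -> dim_ge1 P.
Proof.
move=> n0 [e [e0 hP]]; have e2 : 0 < e / 2 by rewrite divr_gt0.
have small (x : 'rV[R]_n) : (forall k, `|x 0 k| <= e / 2) -> P x.
  by move=> hx; apply: hP => k; apply: le_lt_trans (hx k) _; lra.
exists 0, (const_mx (e / 2)); split; first by apply: small => k; rewrite mxE normr0 ltW.
split; first by apply: small => k; rewrite mxE gtr0_norm.
by move/rowP/(_ (Ordinal n0)); rewrite !mxE => /eqP; rewrite eq_sym gt_eqF.
Qed.

Lemma interior_dotv_const {P z k} :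
  zero_in_interior P -> (forall x, P x -> dotv x z = k) -> k = 0 /\ z = 0.
Proof.
move=> [e [e0 hP]] hz; have e2 : 0 < e / 2 by rewrite divr_gt0.
have k0 : k = 0 by rewrite -(hz 0) ?dotv0l //; apply: hP => l; rewrite mxE normr0.
split=> //; apply/rowP => l; rewrite mxE.
have Pl : P ((e / 2) *: delta_mx 0 l).
  apply: hP => l'; rewrite !mxE eqxx normrM gtr0_norm //=.
  by case: (l' == l); rewrite ?normr1 ?normr0 ?mulr1 ?mulr0; lra.
have := hz _ Pl; rewrite dotvZl dotv_delta k0 => /eqP.
by rewrite mulf_eq0 gt_eqF //= => /eqP.
Qed.

End Interior.

Lemma polar_conv_rows_ineq_desc {R : realType} {p n} (C : 'M[R]_(p, n)) :
  is_ineq_desc (polar (in_conv_rows C)) C (fun=> 1).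
Proof.
move=> y; split=> [hy i|hy x hx]; first exact/hy/row_in_conv.
by apply: (conv_dotv_le C hx) => i; apply: hy.
Qed.

Lemma ineq_desc_scale {R : realType} {q n} {P : 'rV[R]_n -> Prop} {A : 'M[R]_(q, n)} {r s} :
  0 < s -> is_ineq_desc P A (fun=> r) -> is_ineq_desc P (s *: A) (fun=> s * r).
Proof.
move=> s0 hP x; rewrite hP; split=> h j; have := h j;
  by rewrite linearZ dotvZl ler_pM2l.
Qed.

Section SlackMatrix.
Context {R : realType} {p q n : nat} {P : 'rV[R]_n -> Prop}.
Context {V : 'M[R]_(p, n)} {W : 'M[R]_(q, n)} {w : 'I_q -> R}.
Hypotheses (hV : is_conv_rows P V) (hW : is_ineq_desc P W w).

Lemma recession_eq0 {a} : P a -> forall e, (forall j, dotv (row j W) e <= 0) -> e = 0.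
Proof.
move=> Pa e he; apply/rowP => k; rewrite mxE; apply/eqP/negPn/negP => ek.
have ek0 : 0 < `|e 0 k| by rewrite normr_gt0.
pose K := \sum_i `|V i k|.
have K0 : 0 <= K by apply: sumr_ge0.
(* Far enough along the ray, the k-th coordinate leaves the bounding box of V. *)
pose t := (K + `|a 0 k| + 1) / `|e 0 k|.
have t0 : 0 <= t by apply: divr_ge0; [have := normr_ge0 (a 0 k); lra | exact: ltW].
have Pat : P (a + t *: e).
  apply/hW => j; rewrite dotvDr dotvZr.
  have := (hW a).1 Pa j; have := mulr_ge0_le0 t0 (he j); lra.
have bound := conv_coord_bound V _ k ((hV _).1 Pat); rewrite !mxE -/K in bound.
have te : `|t * e 0 k| = K + `|a 0 k| + 1.
  by rewrite normrM (ger0_norm t0) divfK // gt_eqF.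
have := ler_normB (a 0 k + t * e 0 k) (a 0 k); rewrite addrC addKr te; lra.
Qed.

Lemma ineq_index_gt0 : dim_ge1 P -> (0 < q)%N.
Proof.
move=> [x [y [Px [Py xy]]]]; rewrite lt0n; apply/eqP => q0.
apply/xy/eqP; rewrite -subr_eq0; apply/eqP; apply: (recession_eq0 Py (x - y)) => j.
by have := ltn_ord j; rewrite [X in (_ < X)%N]q0.
Qed.

Lemma homog_ineq_kernel_trivial c0 c : dim_ge1 P ->
  (forall j, c0 * w j = dotv (row j W) c) -> c0 = 0 /\ c = 0.
Proof.
move=> [x1 [x2 [Px1 [Px2 x12]]]] hc.
have [c00|c0n] := eqVneq c0 0.
  by split=> //; apply: (recession_eq0 Px1) => j; rewrite -hc c00 mul0r.
pose x := c0^-1 *: c.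
have single b : P b -> b = x.
  move=> Pb; apply/eqP; rewrite -subr_eq0; apply/eqP; apply: (recession_eq0 Pb) => j.
  by rewrite dotvBr dotvZr -hc mulKf // subr_le0; exact: (hW b).1 Pb j.
by case: x12; rewrite (single _ Px1) (single _ Px2).
Qed.

Context {S : 'M[R]_(p, q)}.
Hypothesis hS : forall i j, S i j = w j - dotv (row j W) (row i V).

Lemma slack_mx_factor :
  S = row_mx (const_mx 1) V *m col_mx (\row_j w j) (- W^T).
Proof.
apply/matrixP => i j; rewrite hS mul_row_col !mxE big_ord1 !mxE mul1r.
rewrite /dotv -sumrN; congr (_ + _); apply: eq_bigr => k _.
by rewrite !mxE mulrN mulrC.
Qed.

Lemma slack_affine_in_span h0 h : dim_ge1 P ->
  exists mu : 'I_q -> R, forall i, h0 + dotv h (row i V) = \sum_j mu j * S i j.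
Proof.
move=> dP; set Y := col_mx (\row_j w j) (- W^T).
have freeY : row_free Y.
  apply: inj_row_free => v vY0; rewrite -(hsubmxK v).
  have [l0 r0] : lsubmx v 0 0 = 0 /\ rsubmx v = 0.
    apply: (homog_ineq_kernel_trivial (lsubmx v 0 0) (rsubmx v) dP) => j.
    have := congr1 (fun A : 'rV_q => A 0 j) vY0; rewrite -{1}(hsubmxK v) mul_row_col.
    rewrite !mxE big_ord1 !mxE => /eqP; rewrite addr_eq0 => /eqP ->.
    by rewrite /dotv -sumrN; apply: eq_bigr => k _; rewrite !mxE mulrN opprK mulrC.
  by rewrite r0 (_ : lsubmx v = 0) ?row_mx0 //; apply/rowP => k; rewrite ord1 l0 mxE.
have [L YL] := row_freeP freeY.
pose hcol : 'cV[R]_(1 + n) := col_mx h0%:M h^T.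
exists (fun j => (L *m hcol) j 0) => i.
rewrite [RHS](_ : _ = (S *m (L *m hcol)) i 0); last first.
  by rewrite mxE; apply: eq_bigr => j _; rewrite mulrC.
rewrite slack_mx_factor -/Y mulmxA -(mulmxA _ Y) YL mulmx1 mul_row_col !mxE.
rewrite big_ord1 !mxE mul1r eqxx mulr1n dotvC; congr (_ + _).
by apply: eq_bigr => k _; rewrite !mxE.
Qed.

Lemma slack_combinationE (mu : 'I_p -> R) j :
  \sum_i mu i * S i j = (\sum_i mu i) * w j - dotv (row j W) (\sum_i mu i *: row i V).
Proof.
rewrite dotv_sumr big_distrl -sumrB; apply: eq_bigr => i _.
by rewrite hS dotvZr mulrBr.
Qed.

Lemma slack_nonneg_in_row_cone b (mu : 'I_p -> R) : P b ->
  (forall j, 0 <= \sum_i mu i * S i j) ->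
  exists t (nu : 'I_p -> R), [/\ 0 <= t, (forall i, 0 <= nu i), \sum_i nu i = 1 &
    forall j, \sum_i mu i * S i j = t * \sum_i nu i * S i j].
Proof.
move=> Pb g0; have hb := (hW b).1 Pb.
set m := \sum_i mu i; set d := \sum_i mu i *: row i V.
have gE j : \sum_i mu i * S i j = m * w j - dotv (row j W) d by exact: slack_combinationE.
have [m0|m0] := lerP m 0.
  have [nu [nu0 [nu1 _]]] := (hV b).1 Pb.
  exists 0, nu; split=> // j; rewrite mul0r.
  have db : d = m *: b.
    apply/eqP; rewrite -subr_eq0; apply/eqP; apply: (recession_eq0 Pb) => j'.
    have := g0 j'; rewrite gE dotvBr dotvZr.
    have := ler_wnM2l m0 (hb j'); lra.
  have := g0 j; rewrite gE db dotvZr.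
  have := ler_wnM2l m0 (hb j); lra.
pose y := m^-1 *: d.
have Py : P y.
  by apply/hW => j; rewrite dotvZr ler_pdivrMl // -subr_ge0 -gE.
have [nu [nu0 [nu1 yE]]] := (hV y).1 Py.
exists m, nu; split=> // [|j]; first exact: ltW.
rewrite gE slack_combinationE nu1 mul1r -yE dotvZr mulrBr mulrA mulfV ?gt_eqF //.
by rewrite mul1r.
Qed.

Lemma slack_const_point (lam : 'I_p -> R) : dim_ge1 P ->
  (forall j, \sum_i lam i * S i j = 1) ->
  exists x0 s, 0 < s /\ forall j, w j - dotv (row j W) x0 = s.
Proof.
move=> dP hlam; have [b [_ [Pb _]]] := dP; have hb := (hW b).1 Pb.
set s := \sum_i lam i; set a := \sum_i lam i *: row i V.
have ha j : s * w j - dotv (row j W) a = 1 by rewrite -(hlam j) slack_combinationE.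
have s0 : 0 < s.
  rewrite ltNge; apply/negP => sle.
  have ab : a = s *: b.
    apply/eqP; rewrite -subr_eq0; apply/eqP; apply: (recession_eq0 Pb) => j.
    rewrite dotvBr dotvZr; have := ha j; have := ler_wnM2l sle (hb j); lra.
  pose j0 := Ordinal (ineq_index_gt0 dP).
  have := ha j0; rewrite ab dotvZr; have := ler_wnM2l sle (hb j0); lra.
exists (s^-1 *: a), s^-1; split=> [|j]; first by rewrite invr_gt0.
by apply: (mulfI (lt0r_neq0 s0)); rewrite dotvZr mulrBr mulVKf ?mulfV ?lt0r_neq0.
Qed.

Lemma slack_full_dim_model x0 s : dim_ge1 P ->
  (forall j, w j - dotv (row j W) x0 = s) ->
  exists m (C : 'M[R]_(p, m)) (Wm : 'M[R]_(q, m)), [/\ (0 < m)%N,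
    is_ineq_desc (in_conv_rows C) Wm (fun=> s) &
    forall i j, S i j = s - dotv (row j Wm) (row i C)].
Proof.
move=> [x1 [x2 [Px1 [Px2 x12]]]] hx0.
(* C holds the coordinates of the rows of V - x0 in a basis B of their span. *)
pose U : 'M[R]_(p, n) := \matrix_(i, k) (V i k - x0 0 k).
have rowU i : row i U = row i V - x0 by apply/rowP => k; rewrite !mxE.
pose B := row_base U; pose C := U *m pinvmx B.
have rowC i : row i C *m B = row i V - x0.
  by rewrite -row_mul mulmxKpV ?rowU // eq_row_base.
have convC := in_conv_rows_affine V (row_base_free U) rowC.
have dotW j c : dotv (row j (W *m B^T)) c = dotv (row j W) (c *m B).
  by rewrite row_mul dotv_mulmx trmxK.
exists (\rank U), C, (W *m B^T); split.
- rewrite lt0n mxrank_eq0; apply/eqP => U0; apply: x12.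
  have rowV i : row i V = x0 by apply/eqP; rewrite -subr_eq0 -rowU U0 row0.
  have point x : P x -> x = x0.
    move=> /hV [lam [_ [lam1 ->]]]; under eq_bigr do rewrite rowV.
    by rewrite -scaler_suml lam1 scale1r.
  by rewrite (point _ Px1) (point _ Px2).
- move=> c; rewrite convC -hV hW; split=> h j; have := h j;
    by rewrite dotW dotvDr -(hx0 j) lerBrDl.
- by move=> i j; rewrite dotW rowC dotvBr -(hx0 j) hS; lra.
Qed.

End SlackMatrix.

Lemma polar_conv_rows_of_slack {R : realType} {p q n n2 : nat} {C : 'M[R]_(p, n)}
    {Wm : 'M[R]_(q, n)} {s} {M : 'M[R]_(p, q)} {P2 : 'rV[R]_n2 -> Prop} {V2 W2 w2 b} :
  0 < s -> (0 < n)%N -> is_ineq_desc (in_conv_rows C) Wm (fun=> s) ->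
  (forall i j, M i j = s - dotv (row j Wm) (row i C)) ->
  P2 b -> is_conv_rows P2 V2 -> is_ineq_desc P2 W2 w2 ->
  (forall j i, M^T j i = w2 i - dotv (row i W2) (row j V2)) ->
  is_conv_rows (polar (in_conv_rows C)) (s^-1 *: Wm).
Proof.
move=> s0 n0 hWm hM Pb hV2 hW2 hM2.
have int0 := ineq_desc_zero_in_interior s0 hWm.
move=> y; rewrite polar_conv_rows_ineq_desc; split=> [hy|]; last first.
  move=> [nu [nu0 [nu1 ->]]] i; rewrite dotvC.
  apply: (conv_dotv_le (s^-1 *: Wm)) => [|j]; first by exists nu.
  rewrite linearZ /= dotvZl ler_pdivrMl // mulr1.
  exact: (hWm _).1 (row_in_conv C i) j.
have [mu hmu] := slack_affine_in_span (fun c => iff_refl _) hWm hM s (- s *: y)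
  (interior_dim_ge1 n0 int0).
have [|t [nu [t0 nu0 nu1 hnu]]] := slack_nonneg_in_row_cone hV2 hW2 hM2 b mu Pb.
  move=> i; under eq_bigr do rewrite mxE; rewrite -hmu dotvZl dotvC.
  have := ler_wpM2l (ltW s0) (hy i); lra.
pose Y := \sum_j nu j *: row j Wm.
have hcomb i : \sum_j nu j * M^T j i = s - dotv (row i C) Y.
  transitivity (\sum_j (nu j * s - dotv (row i C) (nu j *: row j Wm))).
    by apply: eq_bigr => j _; rewrite mxE hM mulrBr dotvZr dotvC.
  by rewrite /Y dotv_sumr sumrB -big_distrl /= nu1 mul1r.
have key i : dotv (row i C) (s *: y - t *: Y) = s - t * s.
  have := hnu i; rewrite hcomb; under eq_bigr do rewrite mxE; rewrite -hmu.
  rewrite dotvBr !dotvZr dotvZl dotvC; lra.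
have [k0 z0] := interior_dotv_const int0 (fun x hx => conv_dotv_eq C hx key).
have t1 : t = 1.
  by apply: (mulIf (lt0r_neq0 s0)); rewrite mul1r -(subr0_eq k0).
have yE : y = s^-1 *: Y.
  by rewrite -[Y]scale1r -t1 -(subr0_eq z0) scalerK ?lt0r_neq0.
exists nu; do 2!split=> //; rewrite yE scaler_sumr.
by apply: eq_bigr => j _; rewrite [in RHS]linearZ /= !scalerA mulrC.
Qed.

Theorem proposition2p18 (R : realType) (p q : nat) (M : 'M[R]_(p, q)) :
  (forall i j, 0 <= M i j) ->
  is_slack_matrix M -> is_slack_matrix M^T ->
  exists (n : nat) (P : 'rV[R]_n -> Prop),
    is_polytope P /\ zero_in_interior P /\
    is_slack_matrix_of P M /\ is_slack_matrix_of (polar P) M^T.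
Proof.
move=> _ [n1 [P1 [_ [dP1 [V1 [W1 [w1 [hV1 [hW1 hM1]]]]]]]]]
  [n2 [P2 [_ [dP2 [V2 [W2 [w2 [hV2 [hW2 hM2]]]]]]]]].
have [lam hlam] := slack_affine_in_span hV2 hW2 hM2 1 0 dP2.
have [j|x0 [s [s0 hx0]]] := slack_const_point hV1 hW1 hM1 lam dP1.
  by have := hlam j; rewrite dotv0l addr0 => ->; apply: eq_bigr => i _; rewrite mxE.
have [n [C [Wm [n0 hWm hM]]]] := slack_full_dim_model hV1 hW1 hM1 _ _ dP1 hx0.
have [b [_ [Pb _]]] := dP2.
have hpolar := polar_conv_rows_of_slack s0 n0 hWm hM Pb hV2 hW2 hM2.
have intP := ineq_desc_zero_in_interior s0 hWm.
have intQ := ineq_desc_zero_in_interior ltr01 (polar_conv_rows_ineq_desc C).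
exists n, (in_conv_rows C).
have polP : is_polytope (in_conv_rows C) by exists p, C.
do 2!split=> //; split.
  do 2!split=> //; first exact: interior_dim_ge1 n0 intP.
  by exists C, Wm, (fun=> s).
split; first by exists q, (s^-1 *: Wm).
split; first exact: interior_dim_ge1 n0 intQ.
exists (s^-1 *: Wm), (s *: C), (fun=> s * 1); do 2!split=> //.
  exact: ineq_desc_scale s0 (polar_conv_rows_ineq_desc C).
move=> j i; rewrite mxE hM mulr1 !linearZ /= dotvZl dotvZr mulrA mulfV ?lt0r_neq0 //.
by rewrite mul1r dotvC.
Qed.
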